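(* Let $\ell\le d\le n/2$ and suppose $d$ is known in advance to the algorithm. Any non-adaptive randomized group testing algorithm that, for every defective set $I\subseteq[n]$ of size $d$, with probability at least $2/3$ detects $\ell$ defective items must make at least $\ell\log(n/d)-1$ tests.
   Context: Group testing: items $X=[n]$, unknown defective set $I\subseteq X$ with $d=|I|$. A test $Q\subseteq X$ has answer $1$ if $Q\cap I\neq\emptyset$ and $0$ otherwise. A non-adaptive (randomized) algorithm chooses all its tests before seeing any answer, then computes its output from the answers. ''Detects $\ell$ defective items'' means it outputs $L\subseteq I$ with $|L|=\ell$. ''$d$ is known in advance'' means the algorithm is given an integer $D$ with $d/4\le D\le 4d$ (in particular, the bound applies when $d$ is given exactly). Logarithms are base 2. *)

From HB Require Import structures.
From mathcomp Require Import all_boot all_order all_algebra.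
From mathcomp Require Import reals exp.
Set Implicit Arguments. Unset Strict Implicit. Unset Printing Implicit Defensive.
Import Order.TTheory GRing.Theory Num.Theory.
Local Open Scope ring_scope.

Definition log2 {R : realType} (x : R) : R := ln x / ln 2.

Definition answers (n m : nat) (Q : 'I_m -> {set 'I_n}) (I : {set 'I_n})
  : {ffun 'I_m -> bool} := [ffun i => Q i :&: I != set0].

(* A randomized non-adaptive algorithm with m tests is a finite probability
   space (Omega, p) of random seeds; for seed w the tests are Q w (chosen
   before any answer), and the output is dec w applied to the answer vector. *)
Definition is_distribution {R : realType} (Omega : finType) (p : Omega -> R) :=
  (forall w, 0 <= p w) /\ \sum_(w : Omega) p w = 1.

Definition detects (n : nat) (l : nat) (I L : {set 'I_n}) : bool :=
  (L \subset I) && (#|L| == l).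

Definition success_prob {R : realType} (n m : nat) (Omega : finType)
  (p : Omega -> R) (Q : Omega -> 'I_m -> {set 'I_n})
  (dec : Omega -> {ffun 'I_m -> bool} -> {set 'I_n}) (l : nat) (I : {set 'I_n})
  : R :=
  \sum_(w : Omega | detects l I (dec w (answers (Q w) I))) p w.

From HB Require Import structures.
From mathcomp Require Import all_boot all_order all_algebra.
From mathcomp Require Import reals exp.
From mathcomp Require Import zify lra.
Set Implicit Arguments. Unset Strict Implicit. Unset Printing Implicit Defensive.
Import Order.TTheory GRing.Theory Num.Theory.
Local Open Scope ring_scope.

(* For a fixed seed the answer vector takes at most [2^m]
   values, and each value leads to one output set [L]; a [d]-set [I] on which
   [L] is a correct answer contains [L], and there are at most
   ['C(n - l, d - l)] such sets.  So every seed succeeds on at most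
   [2^m 'C(n - l, d - l)] of the ['C(n, d)] defective sets, while on average a
   seed succeeds on [2/3] of them.  Since ['C(n, d) / 'C(n - l, d - l)] is a
   product of [l] ratios [(n - i) / (d - i) >= n / d], this forces
   [(n / d)^l <= (3/2) 2^m < 2^(m+1)]. *)

Lemma card_supersets_leq (T : finType) (d : nat) (L : {set T}) :
  (#|[set I : {set T} | (#|I| == d) && (L \subset I)]|
     <= 'C(#|T| - #|L|, d - #|L|))%N.
Proof.
set X := [set I | _].
have inj_diff : {in X &, injective (fun I => I :\: L)}.
  move=> I1 I2; rewrite !inE => /andP[_ sLI1] /andP[_ sLI2] /setP eqD.
  apply/setP => x; case: (boolP (x \in L)) => Lx.
    by rewrite (subsetP sLI1 _ Lx) (subsetP sLI2 _ Lx).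
  by have := eqD x; rewrite !inE Lx.
rewrite -(card_in_imset inj_diff) -(cardsC L) addKn -cards_draws.
apply: subset_leq_card; apply/subsetP => _ /imsetP[I + ->].
rewrite !inE => /andP[/eqP <- sLI].
by rewrite cardsD (setIidPr sLI) eqxx andbT setDE subsetIr.
Qed.

Lemma card_detected_sets_leq (n d l : nat) (L : {set 'I_n}) :
  (#|[set I : {set 'I_n} | (#|I| == d) && detects l I L]|
     <= 'C(n - l, d - l))%N.
Proof.
case: (eqVneq #|L| l) => [<- | neLl].
  rewrite -[X in 'C(X - _, _)](card_ord n).
  apply: leq_trans _ (card_supersets_leq d L); apply: subset_leq_card.
  by apply/subsetP => I; rewrite !inE /detects => /andP[-> /andP[-> _]].
rewrite (_ : [set I | _] = set0) ?cards0 //.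
by apply/setP => I; rewrite !inE /detects (negbTE neLl) !andbF.
Qed.

Section SeedAveraging.

Variables (R : realType) (n m d l : nat) (Omega : finType) (p : Omega -> R).
Variables (Q : Omega -> 'I_m -> {set 'I_n})
  (dec : Omega -> {ffun 'I_m -> bool} -> {set 'I_n}).

Definition successes (w : Omega) : {set {set 'I_n}} :=
  [set I : {set 'I_n} | (#|I| == d) && detects l I (dec w (answers (Q w) I))].

Lemma card_successes_leq (w : Omega) :
  (#|successes w| <= 2 ^ m * 'C(n - l, d - l))%N.
Proof.
rewrite -sum1dep_card (partition_big (answers (Q w)) predT) //=.
have -> : (2 ^ m = #|{ffun 'I_m -> bool}|)%N.
  by rewrite card_ffun card_bool card_ord.
rewrite -sum_nat_const; apply: leq_sum => a _.
apply: leq_trans _ (card_detected_sets_leq d l (dec w a)).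
rewrite sum1dep_card; apply: subset_leq_card; apply/subsetP => I.
by rewrite !inE => /andP[/andP[-> detI] /eqP <-].
Qed.

Lemma sum_success_prob :
  \sum_(I : {set 'I_n} | #|I| == d) success_prob p Q dec l I
    = \sum_(w : Omega) p w * #|successes w|%:R.
Proof.
rewrite /success_prob; under eq_bigr do rewrite big_mkcond /=.
rewrite exchange_big /=; apply: eq_bigr => w _.
rewrite -big_mkcondr (eq_bigl (fun I => I \in successes w)) => [|I].
  by rewrite sumr_const mulr_natr.
by rewrite inE.
Qed.

Lemma binomial_leq_successes :
  is_distribution p ->
  (forall I : {set 'I_n}, #|I| = d -> 2 / 3 <= success_prob p Q dec l I) ->
  2 / 3 * 'C(n, d)%:R <= (2 ^ m * 'C(n - l, d - l))%:R :> R.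
Proof.
move=> [p_ge0 p_sum1] succ.
have -> : 2 / 3 * 'C(n, d)%:R
    = \sum_(I in [set I : {set 'I_n} | #|I| == d]) (2 / 3 : R).
  by rewrite sumr_const card_draws card_ord mulr_natr.
rewrite big_set; apply: le_trans (ler_sum _ (fun I => succ I \o eqP)) _.
rewrite sum_success_prob -[leRHS]mul1r -[X in X * _]p_sum1 mulr_suml.
by apply: ler_sum => w _; rewrite ler_wpM2l // ler_nat card_successes_leq.
Qed.

End SeedAveraging.

Lemma bin_sub_ratio_step (n d l : nat) : (l < d)%N -> (d <= n)%N ->
  (n * 'C(n - l.+1, d - l.+1) <= d * 'C(n - l, d - l))%N.
Proof.
move=> ltld ledn.
have diag := mul_bin_diag (n - l) (d - l.+1).
rewrite -subnS subnSK // in diag.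
rewrite -(@leq_pmul2l (n - l)) ?subn_gt0 ?(leq_trans ltld) //.
rewrite mulnCA diag mulnA mulnCA [X in (_ <= X)%N]mulnA leq_mul2r.
by apply/orP; right; nia.
Qed.

Lemma ratio_expr_bin_leq (R : realFieldType) (n d l : nat) :
  (d <= n)%N -> (l <= d)%N ->
  (n%:R / d%:R) ^+ l * 'C(n - l, d - l)%:R <= 'C(n, d)%:R :> R.
Proof.
move=> ledn; elim: l => [|l IHl] ltld; first by rewrite mul1r !subn0.
apply: le_trans (IHl (ltnW ltld)).
rewrite exprSr -mulrA ler_wpM2l ?exprn_ge0 ?divr_ge0 //.
have d_gt0 : (0 < d)%N by apply: leq_ltn_trans ltld.
rewrite mulrAC ler_pdivrMr ?ltr0n //.
by rewrite -!natrM ler_nat [X in (_ <= X)%N]mulnC bin_sub_ratio_step.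
Qed.

Lemma log2_leq_of_expr_leq (R : realType) (x : R) (k j : nat) :
  0 < x -> x ^+ k <= 2 ^+ j -> k%:R * log2 x <= j%:R.
Proof.
move=> x_gt0 le_xk_2j.
have ln2_gt0 : 0 < ln (2 : R) by rewrite ln_gt0 // ltr1n.
rewrite /log2 mulrA ler_pdivrMr // !mulr_natl.
by rewrite -(lnXn k x_gt0) -(lnXn j (ltr0Sn R 1)) ler_ln ?posrE ?exprn_gt0.
Qed.

Theorem theorem12 (R : realType) (n d l m : nat) (Omega : finType)
  (p : Omega -> R) (Q : Omega -> 'I_m -> {set 'I_n})
  (dec : Omega -> {ffun 'I_m -> bool} -> {set 'I_n}) :
  (l <= d)%N -> (d.*2 <= n)%N ->
  is_distribution p ->
  (forall I : {set 'I_n}, #|I| = d -> 2 / 3 <= success_prob p Q dec l I) ->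
  l%:R * log2 (n%:R / d%:R : R) - 1 <= m%:R.
Proof.
move=> le_ld le_2d_n p_distr succ.
have m_ge0 := ler0n R m.
have [-> | l_gt0] := posnP l; first by rewrite mul0r; lra.
have le_dn : (d <= n)%N by apply: leq_trans le_2d_n; rewrite -addnn leq_addr.
have d_gt0 : (0 < d)%N := leq_trans l_gt0 le_ld.
have x_gt0 : 0 < n%:R / d%:R :> R.
  by rewrite divr_gt0 ?ltr0n // (leq_trans d_gt0 le_dn).
have C_gt0 : 0 < 'C(n - l, d - l)%:R :> R by rewrite ltr0n bin_gt0 leq_sub2r.
have le_xl_2m : 2 / 3 * (n%:R / d%:R) ^+ l <= 2 ^+ m :> R.
  rewrite -(ler_pM2r C_gt0) -(mulrA (2 / 3)) -natrX -natrM.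
  apply: le_trans (binomial_leq_successes p_distr succ).
  by apply: ler_wpM2l; [lra | apply: ratio_expr_bin_leq].
have : l%:R * log2 (n%:R / d%:R : R) <= m.+1%:R.
  apply: log2_leq_of_expr_leq x_gt0 _.
  by rewrite exprS; have := exprn_ge0 m (ler0n R 2); lra.
by rewrite -natr1; lra.
Qed.
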